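(* Fix $a>0$, a small constant $\delta>0$ and an integer $k>a/\delta$. For $n\in\mathbb{N}$ let $u_n(x)=n^{-a}(1-\cos 2\pi x)$, and let $v_n$ be constructed as follows: $\Lambda_n\subset[\frac14,\frac34]$ is an interval of length between $C^{-1}n^{-a/2}$ and $Cn^{-a/2}$; $\sigma=\frac12 n^{-a/2}$; $p_N$ is a real trigonometric polynomial (period $1$) of degree $N$ with $C^{-1}n^{\frac a2+\frac a{2k}}\le N\le Cn^{\frac a2+\frac a{2k}}$, such that $\max p_N\ge1$ is attained on $\Lambda_n$ and $|p_N(x)|\le\sigma$ on $[0,1]\setminus\Lambda_n$; $\tilde p_{2N}=e^{-2N}(p_N/\max p_N)^2$; $v_n=u_n\tilde p_{2N}$ ($C>0$ independent of $n$). Let $h_n(x,x')=\frac12(x-x')^2+u_n(x')+v_n(x')$. Let $J_n=\big[\exp(-n^{\frac a2+\frac\delta2}),\frac12\big]$. Then there is a constant $C'>0$ independent of $n$ such that for every minimal configuration $(x_i)_{i\in\mathbb{Z}}$ of $h_n$ with rotation symbol $\omega>0$, the set $\Sigma_n=\{i\in\mathbb{Z}: x_i\in J_n\}$ satisfies \[\#\Sigma_n\le C' n^{a+\frac\delta2}.\]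
   Context: A configuration $(x_i)_{i\in\mathbb{Z}}$ is minimal for $h$ if for all $i<j$ the segment $(x_i,\dots,x_j)$ minimizes $\sum_{i\le s<j}h(z_s,z_{s+1})$ among all $(z_i,\dots,z_j)$ with the same endpoints. Its frequency is $\lim_{n\to\infty}(x_{i+n}-x_i)/n$. The rotation symbol of a minimal configuration with irrational frequency $\omega$ is $\omega$; for frequency $p/q$ (lowest terms) it is $p/q+$, $p/q$ or $p/q-$ according as $x_{i+q}>x_i+p$, $=x_i+p$, or $<x_i+p$ for all $i$. ''Rotation symbol $\omega>0$'' means a rotation symbol with positive value. *)

From Stdlib Require Import Reals Lra ZArith List.
Open Scope R_scope.

Fixpoint fsum (f : nat -> R) (m : nat) : R :=
  match m with O => 0 | S m' => fsum f m' + f m' end.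

Definition seg_action (h : R -> R -> R) (x : Z -> R) (i : Z) (m : nat) : R :=
  fsum (fun t => h (x (i + Z.of_nat t)%Z) (x (i + Z.of_nat t + 1)%Z)) m.

Definition minimal_config (h : R -> R -> R) (x : Z -> R) : Prop :=
  forall (i : Z) (m : nat) (z : Z -> R),
    z i = x i -> z (i + Z.of_nat m)%Z = x (i + Z.of_nat m)%Z ->
    seg_action h x i m <= seg_action h z i m.

Definition has_frequency (x : Z -> R) (omega : R) : Prop :=
  forall i : Z, Un_cv (fun n : nat => (x (i + Z.of_nat n)%Z - x i) / INR n) omega.

Definition trig_poly_deg (p : R -> R) (N : nat) : Prop :=
  exists (c0 : R) (ac bc : nat -> R),
    (forall x, p x = c0 + fsum (fun j => ac (S j) * cos (2 * PI * INR (S j) * x)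
                                      + bc (S j) * sin (2 * PI * INR (S j) * x)) N)
    /\ (N = O \/ ac N <> 0 \/ bc N <> 0).

Definition u_n (a : R) (n : nat) (x : R) : R :=
  Rpower (INR n) (- a) * (1 - cos (2 * PI * x)).

Definition v_n (a : R) (n : nat) (N : nat) (p : R -> R) (M : R) (x : R) : R :=
  u_n a n x * (exp (- 2 * INR N) * (p x / M) ^ 2).

Definition h_n (a : R) (n : nat) (N : nat) (p : R -> R) (M : R) (x x' : R) : R :=
  / 2 * (x - x') ^ 2 + u_n a n x' + v_n a n N p M x'.

(* Admissible data for the construction of v_n at level n, with constant C:
   Lambda_n = [l, r] subset [1/4,3/4] of length in [C^{-1} n^{-a/2}, C n^{-a/2}];
   p trig. polynomial of degree N, C^{-1} n^{a/2+a/(2k)} <= N <= C n^{a/2+a/(2k)};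
   M = max p >= 1 attained on Lambda_n; |p| <= sigma = 1/2 n^{-a/2} on [0,1] \ Lambda_n. *)
Definition admissible (a : R) (k : nat) (C : R) (n : nat)
    (l r : R) (N : nat) (p : R -> R) (M : R) : Prop :=
  / 4 <= l /\ l <= r /\ r <= 3 / 4 /\
  / C * Rpower (INR n) (- a / 2) <= r - l /\ r - l <= C * Rpower (INR n) (- a / 2) /\
  trig_poly_deg p N /\
  / C * Rpower (INR n) (a / 2 + a / (2 * INR k)) <= INR N /\
  INR N <= C * Rpower (INR n) (a / 2 + a / (2 * INR k)) /\
  (forall y, p y <= M) /\ (exists x0, l <= x0 <= r /\ p x0 = M) /\ 1 <= M /\
  (forall y, 0 <= y <= 1 -> ~ (l <= y <= r) -> Rabs (p y) <= / 2 * Rpower (INR n) (- a / 2)).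

Definition in_J (a delta : R) (n : nat) (y : R) : Prop :=
  exp (- Rpower (INR n) (a / 2 + delta / 2)) <= y <= / 2.

From Stdlib Require Import Reals ZArith List Lra Lia Classical FunctionalExtensionality.
From Coquelicot Require Import Coquelicot.
Open Scope R_scope.

(* Write h_n(x, x') = (x - x')^2 / 2 + W(x') with W = u_n + v_n.  By Aubry's
   crossing argument, a minimal configuration of positive rotation number that
   increases once (x_i <= x_{i+1}) is nondecreasing from i on, and one that
   decreases once is nonincreasing before.  So the indices of Sigma_n fall into
   four classes (rising or falling at i, x_i <= 1/6 or x_i >= 1/6), and it is
   enough to bound the diameter of each class.  On [1/6, 1/2] the potential is
   at least n^{-a}/2, so a minimal orbit cannot stay there for more than about
   n^a steps (compare with jumping to 0 and waiting there).  On [0, 1/6] v_n is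
   negligible and W is uniformly convex, which forces
   x_{i+1} - 2 x_i + x_{i-1} >= (n^{-a}/2) x_i: starting above
   exp(-n^{a/2+delta/2}) the orbit is multiplied by e every O(n^{a/2}) steps,
   so it leaves [0, 1/6] within O(n^{a/2} n^{a/2+delta/2}) steps. *)

Lemma fsum_ext (f g : nat -> R) m :
  (forall t, (t < m)%nat -> f t = g t) -> fsum f m = fsum g m.
Proof.
  induction m as [|m IH]; intros H; simpl; [reflexivity|].
  rewrite IH by (intros; apply H; lia). rewrite (H m) by lia. reflexivity.
Qed.

Lemma fsum_le (f g : nat -> R) m :
  (forall t, (t < m)%nat -> f t <= g t) -> fsum f m <= fsum g m.
Proof.
  induction m as [|m IH]; intros H; simpl; [lra|].
  assert (fsum f m <= fsum g m) by (apply IH; intros; apply H; lia).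
  specialize (H m ltac:(lia)). lra.
Qed.

Lemma fsum_lt (f g : nat -> R) m s :
  (forall t, (t < m)%nat -> f t <= g t) -> (s < m)%nat -> f s < g s -> fsum f m < fsum g m.
Proof.
  induction m as [|m IH]; intros H Hs Hfg; simpl; [lia|].
  destruct (Nat.eq_dec s m) as [->|Hne].
  - assert (fsum f m <= fsum g m) by (apply fsum_le; intros; apply H; lia). lra.
  - assert (fsum f m < fsum g m) by (apply IH; [intros; apply H|..]; lia || assumption).
    specialize (H m ltac:(lia)). lra.
Qed.

Lemma fsum_plus (f g : nat -> R) m : fsum (fun t => f t + g t) m = fsum f m + fsum g m.
Proof. induction m; simpl; lra. Qed.

Lemma fsum_zero m : fsum (fun _ => 0) m = 0.
Proof. induction m; simpl; lra. Qed.

Lemma fsum_const_le (f : nat -> R) c m :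
  (forall t, (t < m)%nat -> c <= f t) -> INR m * c <= fsum f m.
Proof.
  induction m as [|m IH]; intros H; simpl fsum; [simpl; lra|].
  rewrite S_INR. assert (INR m * c <= fsum f m) by (apply IH; intros; apply H; lia).
  specialize (H m ltac:(lia)). lra.
Qed.

Lemma fsum_split (f : nat -> R) m1 m2 :
  fsum f (m1 + m2) = fsum f m1 + fsum (fun t => f (m1 + t)%nat) m2.
Proof.
  induction m2 as [|m2 IH]; simpl; [rewrite Nat.add_0_r; lra|].
  rewrite Nat.add_succ_r. simpl. rewrite IH. lra.
Qed.

Lemma seg_action_split h x i K1 K2 :
  seg_action h x i (K1 + K2) = seg_action h x i K1 + seg_action h x (i + Z.of_nat K1) K2.
Proof.
  unfold seg_action. rewrite fsum_split. f_equal. apply fsum_ext. intros t _.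
  rewrite Nat2Z.inj_add, Z.add_assoc. reflexivity.
Qed.

Lemma seg_action_ext h x z i K :
  (forall j, (i <= j <= i + Z.of_nat K)%Z -> x j = z j) ->
  seg_action h x i K = seg_action h z i K.
Proof.
  intros H. unfold seg_action. apply fsum_ext. intros t Ht.
  rewrite !H by lia. reflexivity.
Qed.

Lemma seg_action_one h x i : seg_action h x i 1 = h (x i) (x (i + 1)%Z).
Proof. unfold seg_action. simpl. rewrite Z.add_0_r. lra. Qed.

Lemma seg_action_two h x j :
  seg_action h x (j - 1) 2 = h (x (j - 1)%Z) (x j) + h (x j) (x (j + 1)%Z).
Proof.
  unfold seg_action. simpl.
  replace (j - 1 + 0)%Z with (j - 1)%Z by lia. replace (j - 1 + 0 + 1)%Z with j by lia.
  replace (j - 1 + 1)%Z with j by lia. replace (j - 1 + 1 + 1)%Z with (j + 1)%Z by lia.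
  lra.
Qed.

Lemma seg_action_shift h x i K :
  seg_action h (fun j => x (j + 1)%Z) i K = seg_action h x (i + 1) K.
Proof.
  unfold seg_action. apply fsum_ext. intros t _. cbn beta.
  replace (i + 1 + Z.of_nat t)%Z with (i + Z.of_nat t + 1)%Z by lia. reflexivity.
Qed.

Definition segment_minimal (h : R -> R -> R) (x : Z -> R) (i : Z) (K : nat) : Prop :=
  forall z : Z -> R, z i = x i -> z (i + Z.of_nat K)%Z = x (i + Z.of_nat K)%Z ->
    seg_action h x i K <= seg_action h z i K.

Definition splice (x z : Z -> R) (lo hi : Z) : Z -> R :=
  fun j => if Z_lt_dec lo j then if Z_lt_dec j hi then z j else x j else x j.

Lemma splice_inside x z lo hi j : (lo < j < hi)%Z -> splice x z lo hi j = z j.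
Proof. intros H. unfold splice. destruct (Z_lt_dec lo j), (Z_lt_dec j hi); lia || reflexivity. Qed.

Lemma splice_outside x z lo hi j : (j <= lo \/ hi <= j)%Z -> splice x z lo hi j = x j.
Proof. intros H. unfold splice. destruct (Z_lt_dec lo j), (Z_lt_dec j hi); lia || reflexivity. Qed.

Lemma segment_minimal_inner h x i K1 K2 K3 :
  segment_minimal h x i (K1 + K2 + K3) -> segment_minimal h x (i + Z.of_nat K1) K2.
Proof.
  intros H z Hz1 Hz2.
  set (lo := (i + Z.of_nat K1)%Z) in *. set (hi := (lo + Z.of_nat K2)%Z) in *.
  set (z' := splice x z lo hi).
  assert (Hz' : seg_action h x i (K1 + K2 + K3) <= seg_action h z' i (K1 + K2 + K3)).
  { apply H; unfold z'; rewrite splice_outside by lia; reflexivity. }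
  rewrite !seg_action_split in Hz'. fold lo in Hz'.
  rewrite (seg_action_ext h x z' i K1) in Hz'
    by (intros; unfold z'; rewrite splice_outside by lia; reflexivity).
  replace (i + Z.of_nat (K1 + K2))%Z with hi in Hz' by (unfold hi, lo; lia).
  rewrite (seg_action_ext h x z' hi K3) in Hz'
    by (intros; unfold z'; rewrite splice_outside by lia; reflexivity).
  rewrite (seg_action_ext h z' z lo K2) in Hz'; [lra|].
  intros j Hj. unfold z'.
  destruct (Z.eq_dec j lo) as [->|]; [rewrite splice_outside by lia; auto|].
  destruct (Z.eq_dec j hi) as [->|]; [rewrite splice_outside by lia; auto|].
  apply splice_inside; lia.
Qed.

Lemma minimal_config_shift h x :
  minimal_config h x -> minimal_config h (fun j => x (j + 1)%Z).
Proof.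
  intros H i m z Hz1 Hz2.
  rewrite seg_action_shift.
  replace (seg_action h z i m) with (seg_action h (fun j => z (j - 1)%Z) (i + 1) m).
  - cbn beta in Hz1, Hz2. apply H; cbn beta.
    + replace (i + 1 - 1)%Z with i by lia. exact Hz1.
    + replace (i + 1 + Z.of_nat m - 1)%Z with (i + Z.of_nat m)%Z by lia.
      replace (i + 1 + Z.of_nat m)%Z with (i + Z.of_nat m + 1)%Z by lia. exact Hz2.
  - unfold seg_action. apply fsum_ext. intros t _. cbn beta.
    replace (i + 1 + Z.of_nat t - 1)%Z with (i + Z.of_nat t)%Z by lia.
    replace (i + 1 + Z.of_nat t + 1 - 1)%Z with (i + Z.of_nat t + 1)%Z by lia. reflexivity.
Qed.

(** * Minimal configurations of (x - x')^2 / 2 + W(x') *)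

Definition hpot (W : R -> R) (x x' : R) : R := / 2 * (x - x') ^ 2 + W x'.

Definition pointwise_minimal (W : R -> R) (x : Z -> R) (j : Z) : Prop :=
  forall t, hpot W (x (j - 1)%Z) (x j) + hpot W (x j) (x (j + 1)%Z)
            <= hpot W (x (j - 1)%Z) t + hpot W t (x (j + 1)%Z).

Lemma segment_minimal_pointwise W x j :
  segment_minimal (hpot W) x (j - 1) 2 -> pointwise_minimal W x j.
Proof.
  intros H t. set (z := splice x (fun _ => t) (j - 1) (j + 1)).
  assert (Hz : seg_action (hpot W) x (j - 1) 2 <= seg_action (hpot W) z (j - 1) 2).
  { apply H; unfold z; rewrite splice_outside by lia; reflexivity. }
  rewrite !seg_action_two in Hz. unfold z in Hz.
  rewrite (splice_outside _ _ _ _ (j - 1)), (splice_outside _ _ _ _ (j + 1)), splice_inside in Hz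
    by lia.
  exact Hz.
Qed.

Lemma minimal_pointwise W x :
  minimal_config (hpot W) x -> forall j, pointwise_minimal W x j.
Proof. intros H j. apply segment_minimal_pointwise. exact (H (j - 1)%Z 2%nat). Qed.

Lemma pointwise_minimal_euler_lagrange W x j l :
  pointwise_minimal W x j -> derivable_pt_lim W (x j) l ->
  (x j - x (j - 1)%Z) + l + (x j - x (j + 1)%Z) = 0.
Proof.
  intros H Hl.
  set (a := x (j - 1)%Z) in *. set (b := x (j + 1)%Z) in *. set (c := x j) in *.
  set (G := fun t => hpot W a t + hpot W t b).
  assert (HG : derivable_pt_lim G c ((c - a) + l + (c - b))).
  { apply is_derive_Reals. apply is_derive_Reals in Hl. unfold G, hpot.
    evar (L : R). replace ((c - a) + l + (c - b)) with L.
    - apply @is_derive_plus; apply @is_derive_plus.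
      + auto_derive; [auto | reflexivity].
      + exact Hl.
      + auto_derive; [auto | reflexivity].
      + apply is_derive_const.
    - unfold L. rewrite !plus_zero_r. unfold plus; simpl. field. }
  set (pr := exist (fun l0 => derivable_pt_abs G c l0) _ HG : derivable_pt G c).
  apply (deriv_minimum G (c - 1) (c + 1) c pr ltac:(lra) ltac:(lra)).
  intros t _ _. apply H.
Qed.

Section EulerLagrange.
Variable W : R -> R.
Hypothesis W_derivable : forall c, exists l, derivable_pt_lim W c l.

Lemma euler_lagrange_reflect f g j :
  pointwise_minimal W f j -> pointwise_minimal W g j -> f j = g j ->
  f (j - 1)%Z - g (j - 1)%Z = g (j + 1)%Z - f (j + 1)%Z.
Proof.
  intros Hf Hg E. destruct (W_derivable (f j)) as [l Hl].
  assert (Ef := pointwise_minimal_euler_lagrange W f j l Hf Hl).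
  rewrite E in Hl. assert (Eg := pointwise_minimal_euler_lagrange W g j l Hg Hl). lra.
Qed.

Lemma agree_on_window f g lo hi j :
  (forall k, (lo < k < hi)%Z -> pointwise_minimal W f k /\ pointwise_minimal W g k) ->
  (lo <= j)%Z -> (j + 1 <= hi)%Z -> f j = g j -> f (j + 1)%Z = g (j + 1)%Z ->
  forall k, (lo <= k <= hi)%Z -> f k = g k.
Proof.
  intros Hpm Hlo Hhi E0 E1.
  assert (Fwd : forall d : nat, (j + Z.of_nat d + 1 <= hi)%Z ->
            f (j + Z.of_nat d)%Z = g (j + Z.of_nat d)%Z /\
            f (j + Z.of_nat d + 1)%Z = g (j + Z.of_nat d + 1)%Z).
  { induction d as [|d IH]; intros Hd.
    - rewrite Z.add_0_r. split; assumption.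
    - destruct IH as [IH0 IH1]; [lia|].
      set (k := (j + Z.of_nat d + 1)%Z) in *.
      destruct (Hpm k ltac:(unfold k; lia)) as [Hf Hg].
      assert (Hr := euler_lagrange_reflect f g k Hf Hg IH1).
      replace (k - 1)%Z with (j + Z.of_nat d)%Z in Hr by (unfold k; lia).
      replace (j + Z.of_nat (S d))%Z with k by (unfold k; lia).
      split; [exact IH1 | lra]. }
  assert (Bwd : forall d : nat, (lo <= j - Z.of_nat d)%Z ->
            f (j - Z.of_nat d)%Z = g (j - Z.of_nat d)%Z /\
            f (j - Z.of_nat d + 1)%Z = g (j - Z.of_nat d + 1)%Z).
  { induction d as [|d IH]; intros Hd.
    - rewrite Z.sub_0_r. split; assumption.
    - destruct IH as [IH0 IH1]; [lia|].
      set (k := (j - Z.of_nat d)%Z) in *.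
      destruct (Hpm k ltac:(unfold k; lia)) as [Hf Hg].
      assert (Hr := euler_lagrange_reflect f g k Hf Hg IH0).
      replace (j - Z.of_nat (S d))%Z with (k - 1)%Z by (unfold k; lia).
      replace (k - 1 + 1)%Z with k by lia.
      split; [lra | exact IH0]. }
  intros k Hk. destruct (Z_le_gt_dec j k).
  - destruct (Z.eq_dec k j) as [->|]; [exact E0|].
    destruct (Fwd (Z.to_nat (k - j - 1)) ltac:(lia)) as [_ X].
    replace (j + Z.of_nat (Z.to_nat (k - j - 1)) + 1)%Z with k in X by lia. exact X.
  - destruct (Bwd (Z.to_nat (j - k)) ltac:(lia)) as [X _].
    replace (j - Z.of_nat (Z.to_nat (j - k)))%Z with k in X by lia. exact X.
Qed.

Lemma minimal_agree_everywhere f g j :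
  minimal_config (hpot W) f -> minimal_config (hpot W) g ->
  f j = g j -> f (j + 1)%Z = g (j + 1)%Z -> forall k, f k = g k.
Proof.
  intros Hf Hg E0 E1 k.
  apply (agree_on_window f g (Z.min k j - 1) (Z.max k (j + 1) + 1) j); try lia; auto.
  intros; split; apply minimal_pointwise; assumption.
Qed.

End EulerLagrange.

(** * Aubry's crossing lemma and monotonicity *)

Lemma hpot_min_max_le W a b a' b' :
  hpot W (Rmin a a') (Rmin b b') + hpot W (Rmax a a') (Rmax b b') <= hpot W a b + hpot W a' b'.
Proof. unfold hpot, Rmin, Rmax. destruct (Rle_dec a a'), (Rle_dec b b'); nra. Qed.

Lemma hpot_min_max_lt W a b a' b' : (a - a') * (b - b') < 0 ->
  hpot W (Rmin a a') (Rmin b b') + hpot W (Rmax a a') (Rmax b b') < hpot W a b + hpot W a' b'.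
Proof. unfold hpot, Rmin, Rmax. destruct (Rle_dec a a'), (Rle_dec b b'); nra. Qed.

Section Crossing.
Variable W : R -> R.
Hypothesis W_derivable : forall c, exists l, derivable_pt_lim W c l.
Variables (x y : Z -> R) (i : Z) (K : nat).
Hypothesis x_minimal : minimal_config (hpot W) x.
Hypothesis y_minimal : minimal_config (hpot W) y.
Hypothesis K_pos : (1 <= K)%nat.
Hypothesis le_left : x i <= y i.
Hypothesis le_right : x (i + Z.of_nat K)%Z <= y (i + Z.of_nat K)%Z.

Let mn (j : Z) := Rmin (x j) (y j).
Let mx (j : Z) := Rmax (x j) (y j).
Let act (z : Z -> R) := seg_action (hpot W) z i K.

Lemma action_min_max_le : act mn + act mx <= act x + act y.
Proof.
  unfold act, seg_action. rewrite <- !fsum_plus. apply fsum_le. intros t _.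
  apply hpot_min_max_le.
Qed.

Lemma action_le_min_max : act x <= act mn /\ act y <= act mx.
Proof.
  split; [apply x_minimal | apply y_minimal];
    unfold mn, mx; [apply Rmin_left|apply Rmin_left|apply Rmax_right|apply Rmax_right]; lra.
Qed.

Lemma min_segment_minimal : segment_minimal (hpot W) mn i K.
Proof.
  intros z E1 E2.
  assert (act x <= act z).
  { apply x_minimal; [rewrite E1|rewrite E2]; unfold mn; apply Rmin_left; lra. }
  pose proof action_min_max_le. pose proof action_le_min_max. unfold act in *. lra.
Qed.

Lemma min_pointwise_minimal k :
  (i < k < i + Z.of_nat K)%Z -> pointwise_minimal W mn k.
Proof.
  intros Hk. set (s := Z.to_nat (k - i)).
  replace k with (i + Z.of_nat (s - 1) + 1)%Z by (unfold s; lia).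
  apply segment_minimal_pointwise.
  replace (i + Z.of_nat (s - 1) + 1 - 1)%Z with (i + Z.of_nat (s - 1))%Z by lia.
  apply (segment_minimal_inner _ _ _ (s - 1) 2 (K - s - 1)).
  replace (s - 1 + 2 + (K - s - 1))%nat with K by (unfold s; lia).
  apply min_segment_minimal.
Qed.

Lemma no_crossing k :
  (i <= k < i + Z.of_nat K)%Z -> 0 <= (y k - x k) * (y (k + 1)%Z - x (k + 1)%Z).
Proof.
  intros Hk. apply Rnot_lt_le. intros Hcross.
  assert (act mn + act mx < act x + act y).
  { unfold act, seg_action. rewrite <- !fsum_plus.
    apply (fsum_lt _ _ _ (Z.to_nat (k - i))); [intros; apply hpot_min_max_le | lia |].
    replace (i + Z.of_nat (Z.to_nat (k - i)))%Z with k by lia.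
    apply hpot_min_max_lt. nra. }
  pose proof action_le_min_max. lra.
Qed.

Lemma aubry_crossing :
  (forall k, (i <= k <= i + Z.of_nat K)%Z -> x k <= y k) \/
  (x i = y i /\ forall k, (i <= k <= i + Z.of_nat K)%Z -> y k <= x k).
Proof.
  (* min(x, y) either agrees with x at two consecutive points, hence on the whole
     window, or, by the no-crossing property, with y at i + 1 and i + 2. *)
  set (hi := (i + Z.of_nat K)%Z) in *.
  assert (Hpm : forall z, minimal_config (hpot W) z -> forall k, (i < k < hi)%Z ->
            pointwise_minimal W mn k /\ pointwise_minimal W z k).
  { intros z Hz k Hk.
    split; [apply min_pointwise_minimal; exact Hk | apply minimal_pointwise, Hz]. }
  destruct (classic (exists k, (i <= k < hi)%Z /\ x k <= y k /\ x (k + 1)%Z <= y (k + 1)%Z))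
    as [[k [Hk [Hk0 Hk1]]] | Hnone].
  - left. intros k' Hk'.
    rewrite <- (agree_on_window W W_derivable mn x i hi k (Hpm x x_minimal)) by
      (lia || (unfold mn; apply Rmin_left; lra)).
    apply Rmin_r.
  - right.
    assert (Hi1 : y (i + 1)%Z < x (i + 1)%Z).
    { apply Rnot_le_lt. intros Hle. apply Hnone. exists i. split; [lia | split; lra]. }
    assert (HK2 : (i + 2 <= hi)%Z).
    { destruct (Z.eq_dec hi (i + 1)) as [E|]; [|lia]. rewrite <- E in Hi1. lra. }
    assert (C0 := no_crossing i ltac:(lia)).
    assert (C1 := no_crossing (i + 1) ltac:(lia)).
    replace (i + 1 + 1)%Z with (i + 2)%Z in C1 by lia.
    assert (Hi2 : y (i + 2)%Z <= x (i + 2)%Z) by nra.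
    split; [nra|]. intros k' Hk'.
    rewrite <- (agree_on_window W W_derivable mn y i hi (i + 1) (Hpm y y_minimal)) by
      (try lia; unfold mn; apply Rmin_right; replace (i + 1 + 1)%Z with (i + 2)%Z by lia; lra).
    apply Rmin_l.
Qed.

End Crossing.

Lemma nondecreasing_on (x : Z -> R) lo hi :
  (forall k, (lo <= k < hi)%Z -> x k <= x (k + 1)%Z) ->
  forall k1 k2, (lo <= k1)%Z -> (k1 <= k2 <= hi)%Z -> x k1 <= x k2.
Proof.
  intros H k1 k2 Hk1 Hk. replace k2 with (k1 + Z.of_nat (Z.to_nat (k2 - k1)))%Z in * by lia.
  induction (Z.to_nat (k2 - k1)) as [|d IH]; [rewrite Z.add_0_r; lra|].
  rewrite Nat2Z.inj_succ, <- Z.add_1_r, Z.add_assoc in *.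
  specialize (H (k1 + Z.of_nat d)%Z ltac:(lia)). specialize (IH ltac:(lia)). lra.
Qed.

Lemma nonincreasing_on (x : Z -> R) lo hi :
  (forall k, (lo <= k < hi)%Z -> x (k + 1)%Z <= x k) ->
  forall k1 k2, (lo <= k1)%Z -> (k1 <= k2 <= hi)%Z -> x k2 <= x k1.
Proof.
  intros H k1 k2 Hk1 Hk. apply Ropp_le_cancel.
  apply (nondecreasing_on (fun k => - x k) lo hi); [|lia|lia].
  intros k Hk'. specialize (H k Hk'). lra.
Qed.

Section Monotonicity.
Variable W : R -> R.
Hypothesis W_derivable : forall c, exists l, derivable_pt_lim W c l.
Variable x : Z -> R.
Hypothesis x_minimal : minimal_config (hpot W) x.
Hypothesis increases_eventually : forall k, exists j, (k < j)%Z /\ x j < x (j + 1)%Z.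

Let y (j : Z) := x (j + 1)%Z.

Lemma crossing_shift i j :
  (i < j)%Z -> x i <= y i -> x j <= y j ->
  (forall k, (i <= k <= j)%Z -> x k <= y k) \/
  (x i = y i /\ forall k, (i <= k <= j)%Z -> y k <= x k).
Proof.
  intros Hij Hi Hj. replace j with (i + Z.of_nat (Z.to_nat (j - i)))%Z by lia.
  apply (aubry_crossing W W_derivable); try assumption.
  - apply minimal_config_shift, x_minimal.
  - lia.
  - replace (i + Z.of_nat (Z.to_nat (j - i)))%Z with j by lia. exact Hj.
Qed.

Lemma nondecreasing_between i j :
  (i < j)%Z -> x i <= x (i + 1)%Z -> x j <= x (j + 1)%Z ->
  forall k, (i <= k <= j)%Z -> x k <= x (k + 1)%Z.
Proof.
  intros Hij Hi Hj.
  destruct (crossing_shift i j Hij Hi Hj) as [Hle | [Hi_eq Hge]]; [exact Hle|].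
  (* x touches its shift at i; the Euler-Lagrange equation at i reflects the order
     at i + 1 to i - 1, so the crossing argument applies on [i - 1, j], unless x
     equals its shift. *)
  assert (Hy_pm : forall k, pointwise_minimal W y k)
    by (apply minimal_pointwise, minimal_config_shift, x_minimal).
  assert (Hr := euler_lagrange_reflect W W_derivable x y i
                  (minimal_pointwise W x x_minimal i) (Hy_pm i) Hi_eq).
  assert (Hi1 := Hge (i + 1)%Z ltac:(lia)).
  destruct (crossing_shift (i - 1) j ltac:(lia) ltac:(lra) Hj) as [Hle' | [Hi_eq' _]].
  - intros k Hk. apply Hle'. lia.
  - exfalso.
    assert (Hxy : forall k, x k = y k).
    { apply (minimal_agree_everywhere W W_derivable x y (i - 1)); try assumption.
      - apply minimal_config_shift, x_minimal.
      - replace (i - 1 + 1)%Z with i by lia. exact Hi_eq. }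
    destruct (increases_eventually 0) as [k [_ Hk]]. rewrite (Hxy k) in Hk. unfold y in Hk. lra.
Qed.

Lemma nondecreasing_after i :
  x i <= x (i + 1)%Z -> forall k, (i <= k)%Z -> x k <= x (k + 1)%Z.
Proof.
  intros Hi k Hk. destruct (increases_eventually k) as [j [Hkj Hj]].
  apply (nondecreasing_between i j); lra || lia.
Qed.

Lemma nonincreasing_before i :
  x (i + 1)%Z < x i -> forall k, (k <= i)%Z -> x (k + 1)%Z <= x k.
Proof.
  intros Hi k Hk. apply Rnot_lt_le. intros Hlt.
  pose proof (nondecreasing_after k ltac:(lra) i Hk). lra.
Qed.

End Monotonicity.

Lemma frequency_pos_increases x omega :
  has_frequency x omega -> 0 < omega -> forall k, exists j, (k < j)%Z /\ x j < x (j + 1)%Z.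
Proof.
  intros Hf Hom k. apply NNPP. intros Hnone.
  assert (Hdec : forall j, (k < j)%Z -> x (j + 1)%Z <= x j).
  { intros j Hj. apply Rnot_lt_le. intros Hlt. apply Hnone. exists j. split; assumption. }
  destruct (Hf (k + 1)%Z omega Hom) as [N0 HN0]. specialize (HN0 (S N0) ltac:(lia)).
  unfold R_dist in HN0. apply Rabs_def2 in HN0.
  assert (Hpos : 0 < INR (S N0)) by (apply lt_0_INR; lia).
  assert (x (k + 1 + Z.of_nat (S N0))%Z <= x (k + 1)%Z).
  { apply (nonincreasing_on x (k + 1) (k + 1 + Z.of_nat (S N0))); [intros; apply Hdec | ..]; lia. }
  assert ((x (k + 1 + Z.of_nat (S N0))%Z - x (k + 1)%Z) / INR (S N0) <= 0).
  { unfold Rdiv. apply Rmult_le_0_r; [lra | left; apply Rinv_0_lt_compat, Hpos]. }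
  lra.
Qed.

(** * Time spent near and away from the minimum of W *)

Section ConvexGrowth.
Variables (z : nat -> R) (kap : R) (K : nat).
Hypothesis kap_pos : 0 < kap.
Hypothesis second_difference :
  forall t, (1 <= t)%nat -> (t < K)%nat -> (z (S t) - z t) - (z t - z (t - 1)%nat) >= kap * z t.

Lemma growth_quadratic t0 j :
  0 <= z t0 -> z t0 <= z (S t0) -> (t0 + j <= K)%nat ->
  z (t0 + j)%nat >= z t0 * (1 + kap * INR j * (INR j - 1) / 2) /\
  ((t0 + j < K)%nat -> z (S (t0 + j)) - z (t0 + j)%nat >= INR j * kap * z t0).
Proof.
  intros Hz0 Hq0. induction j as [|j IH]; intros Hj.
  - rewrite Nat.add_0_r. simpl. split; [lra | intros _; lra].
  - destruct IH as [IH1 IH2]; [lia|].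
    assert (Hq := IH2 ltac:(lia)).
    rewrite S_INR. replace (t0 + S j)%nat with (S (t0 + j)) by lia.
    assert (0 <= INR j) by apply pos_INR.
    assert (Hzj : z (S (t0 + j)) >= z t0 * (1 + kap * (INR j + 1) * (INR j + 1 - 1) / 2)).
    { replace (z t0 * (1 + kap * (INR j + 1) * (INR j + 1 - 1) / 2)) with
        (z t0 * (1 + kap * INR j * (INR j - 1) / 2) + INR j * kap * z t0) by field. lra. }
    split; [exact Hzj|]. intros Hlt.
    assert (Hrec := second_difference (S (t0 + j)) ltac:(lia) Hlt).
    replace (S (t0 + j) - 1)%nat with (t0 + j)%nat in Hrec by lia.
    assert (0 <= kap * (INR j + 1) * (INR j + 1 - 1) / 2).
    { replace (INR j + 1 - 1) with (INR j) by ring.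
      assert (0 <= kap * INR j) by nra. nra. }
    assert (z (S (t0 + j)) >= z t0) by nra.
    assert (kap * z (S (t0 + j)) >= kap * z t0) by nra.
    nra.
Qed.

Variable m : nat.
Hypothesis m_pos : (1 <= m)%nat.
Hypothesis m_large : 2 <= kap * INR m * (INR m - 1) / 2.

Lemma growth_exponential j :
  0 <= z 0%nat -> z 0%nat <= z 1%nat -> (j * m <= K)%nat ->
  z (j * m)%nat >= exp (INR j) * z 0%nat /\ ((j * m < K)%nat -> z (j * m)%nat <= z (S (j * m))).
Proof.
  intros Hz0 Hq0. induction j as [|j IH]; intros Hj.
  - simpl. rewrite exp_0. split; [lra | intros; exact Hq0].
  - destruct IH as [IH1 IH2]; [simpl in Hj; lia|].
    assert (Hq := IH2 ltac:(simpl in Hj; lia)).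
    assert (Hexp : 0 < exp (INR j)) by apply exp_pos.
    assert (Hpos : 0 <= z (j * m)%nat) by nra.
    destruct (growth_quadratic (j * m) m Hpos Hq ltac:(simpl in Hj; lia)) as [B1 B2].
    replace (S j * m)%nat with (j * m + m)%nat by lia.
    assert (exp 1 <= 3) by apply exp_le_3. assert (0 < exp 1) by apply exp_pos.
    split.
    + rewrite S_INR, exp_plus. nra.
    + intros Hl. specialize (B2 Hl). assert (0 <= INR m) by apply pos_INR.
      assert (0 <= INR m * kap * z (j * m)%nat) by (apply Rmult_le_pos; [apply Rmult_le_pos|]; lra).
      lra.
Qed.

Lemma escape_time_bound P :
  exp (- P) <= z 0%nat -> z 0%nat <= z 1%nat -> (forall t, (t <= K)%nat -> z t <= 1) ->
  INR K < (P + 1) * INR m.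
Proof.
  intros He Hq Hb. set (j := (K / m)%nat).
  assert (Hjm : (j * m <= K)%nat) by (unfold j; rewrite Nat.mul_comm; apply Nat.Div0.mul_div_le).
  assert (0 < exp (- P)) by apply exp_pos.
  destruct (growth_exponential j ltac:(lra) Hq Hjm) as [Hgrow _].
  specialize (Hb _ Hjm).
  assert (Hj : INR j <= P).
  { apply Rnot_lt_le. intros Hlt.
    assert (1 < exp (INR j + - P)) by (rewrite <- exp_0; apply exp_increasing; lra).
    rewrite exp_plus in *. assert (0 < exp (INR j)) by apply exp_pos. nra. }
  assert (HK : (K < (j + 1) * m)%nat).
  { unfold j. pose proof (Nat.div_mod K m ltac:(lia)).
    pose proof (Nat.mod_upper_bound K m ltac:(lia)).
    nia. }
  apply lt_INR in HK. rewrite mult_INR, plus_INR in HK. simpl in HK.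
  assert (0 < INR m) by (apply lt_0_INR; lia). nra.
Qed.

End ConvexGrowth.

Lemma seg_action_jump_to_zero W x i K :
  W 0 = 0 ->
  seg_action (hpot W) (splice x (fun _ => 0) i (i + Z.of_nat (K + 2))) i (K + 2) =
  / 2 * x i ^ 2 + / 2 * x (i + Z.of_nat (K + 2))%Z ^ 2 + W (x (i + Z.of_nat (K + 2))%Z).
Proof.
  intros HW0. set (e := (i + Z.of_nat (K + 2))%Z). set (z := splice x (fun _ => 0) i e).
  assert (Hz_i : z i = x i) by (unfold z; apply splice_outside; lia).
  assert (Hz_e : z e = x e) by (unfold z; apply splice_outside; lia).
  assert (Hz_in : forall j, (i < j < e)%Z -> z j = 0)
    by (intros; unfold z; rewrite splice_inside by lia; reflexivity).
  assert (Hmid : seg_action (hpot W) z (i + Z.of_nat 1) K = 0).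
  { rewrite (seg_action_ext _ _ (fun _ => 0)) by (intros; apply Hz_in; unfold e; lia).
    transitivity (fsum (fun _ => 0) K); [|apply fsum_zero].
    apply fsum_ext. intros. unfold hpot. rewrite HW0. lra. }
  replace (K + 2)%nat with (1 + K + 1)%nat by lia.
  rewrite !seg_action_split, !seg_action_one, Hmid.
  replace (i + Z.of_nat (1 + K))%Z with (e - 1)%Z by (unfold e; lia).
  replace (e - 1 + 1)%Z with e by lia.
  rewrite Hz_i, Hz_e, (Hz_in (e - 1)%Z), (Hz_in (i + 1)%Z) by (unfold e; lia).
  unfold hpot. rewrite HW0. lra.
Qed.

Lemma seg_action_ge_potential W x c i K :
  (forall k, (i < k <= i + Z.of_nat K)%Z -> c <= W (x k)) ->
  INR K * c + W (x (i + Z.of_nat (K + 1))%Z) <= seg_action (hpot W) x i (K + 1).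
Proof.
  intros HWc. rewrite seg_action_split, seg_action_one.
  replace (i + Z.of_nat K + 1)%Z with (i + Z.of_nat (K + 1))%Z by lia.
  assert (INR K * c <= seg_action (hpot W) x i K).
  { apply fsum_const_le. intros t Ht. unfold hpot.
    assert (c <= W (x (i + Z.of_nat t + 1)%Z)) by (apply HWc; lia).
    pose proof (pow2_ge_0 (x (i + Z.of_nat t)%Z - x (i + Z.of_nat t + 1)%Z)). lra. }
  set (e := (i + Z.of_nat (K + 1))%Z).
  assert (W (x e) <= hpot W (x (i + Z.of_nat K)%Z) (x e)).
  { unfold hpot. pose proof (pow2_ge_0 (x (i + Z.of_nat K)%Z - x e)). lra. }
  lra.
Qed.

(* Compare x with the configuration that jumps to the minimum 0 of W and waits there. *)
Lemma excursion_length_bound W x c eta i K :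
  minimal_config (hpot W) x -> W 0 = 0 -> 0 <= c -> 0 <= eta ->
  (forall y, eta <= y <= / 2 -> c <= W y) ->
  (forall k, (i <= k <= i + Z.of_nat K)%Z -> eta <= x k <= / 2) ->
  (INR K - 1) * c <= / 4.
Proof.
  intros Hx HW0 Hc Heta HWc Hrange.
  destruct (le_lt_dec K 1) as [HK|HK].
  { assert (INR K <= 1) by (replace 1 with (INR 1) by reflexivity; apply le_INR, HK). nra. }
  replace K with (K - 2 + 2)%nat in * by lia. set (K' := (K - 2)%nat) in *.
  assert (Hcmp : seg_action (hpot W) x i (K' + 2) <=
                 seg_action (hpot W) (splice x (fun _ => 0) i (i + Z.of_nat (K' + 2))) i (K' + 2))
    by (apply Hx; rewrite splice_outside by lia; reflexivity).
  rewrite seg_action_jump_to_zero in Hcmp by exact HW0.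
  assert (Hlow := seg_action_ge_potential W x c i (K' + 1)
                    ltac:(intros k Hk; apply HWc, Hrange; lia)).
  replace (K' + 1 + 1)%nat with (K' + 2)%nat in Hlow by lia.
  set (e := (i + Z.of_nat (K' + 2))%Z) in *.
  replace (INR (K' + 1)) with (INR (K' + 2) - 1) in Hlow by (rewrite !plus_INR; simpl; lra).
  assert (Hi := Hrange i ltac:(lia)). assert (He := Hrange e ltac:(unfold e; lia)).
  assert (x i ^ 2 <= / 4 /\ x e ^ 2 <= / 4) by (split; nra).
  lra.
Qed.

(** * The potential u_n + v_n *)

Lemma PI_gt_3 : 3 < PI.
Proof. pose proof PI2_3_2. lra. Qed.

Lemma sin_ge_half_id z : 0 <= z <= 3 / 2 -> z / 2 <= sin z.
Proof.
  intros Hz. destruct (pre_sin_bound z 0 ltac:(lra) ltac:(lra)) as [H _].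
  replace (sin_approx z (2 * 0 + 1)) with (z - z ^ 3 / 6) in H
    by (unfold sin_approx, sin_term; simpl; field).
  assert (z ^ 3 <= 3 * z) by nra. lra.
Qed.

Lemma one_minus_cos_le_sqr z : 0 <= z <= 2 * PI -> 1 - cos z <= z ^ 2 / 2.
Proof.
  intros Hz. replace z with (2 * (z / 2)) at 1 by field. rewrite cos_2a_sin.
  assert (0 <= sin (z / 2)) by (apply sin_ge_0; lra).
  assert (sin (z / 2) <= z / 2).
  { destruct (Req_dec z 0) as [->|]; [unfold Rdiv; rewrite Rmult_0_l, sin_0; lra|].
    left. apply sin_lt_x. lra. }
  nra.
Qed.

Lemma cos_gap_lower A c : 0 <= A <= 1 -> 0 <= c <= / 6 ->
  9 / 2 * A * c ^ 2 <= cos (2 * PI * ((1 - A) * c)) - cos (2 * PI * c).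
Proof.
  intros HA Hc. pose proof PI_gt_3. pose proof PI_4.
  rewrite form2.
  replace ((2 * PI * ((1 - A) * c) - 2 * PI * c) / 2) with (- (PI * A * c)) by field.
  replace ((2 * PI * ((1 - A) * c) + 2 * PI * c) / 2) with (PI * ((2 - A) * c)) by field.
  rewrite sin_neg.
  assert (0 <= A * c <= / 6) by (split; nra). assert (0 <= (2 - A) * c <= / 3) by (split; nra).
  assert (S1 := sin_ge_half_id (PI * A * c) ltac:(rewrite Rmult_assoc; split; nra)).
  assert (S2 := sin_ge_half_id (PI * ((2 - A) * c)) ltac:(split; nra)).
  assert (PI * A * c / 2 * (PI * c / 2) <= sin (PI * A * c) * sin (PI * ((2 - A) * c))).
  { assert (0 <= PI * (A * c)) by (apply Rmult_le_pos; lra).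
    assert (PI * c <= PI * ((2 - A) * c)) by (apply Rmult_le_compat_l; nra).
    rewrite Rmult_assoc in *. apply Rmult_le_compat; nra. }
  assert (9 <= PI * PI) by nra. assert (0 <= A * c ^ 2) by nra.
  replace (PI * A * c / 2 * (PI * c / 2)) with (PI * PI / 4 * (A * c ^ 2)) in * by field.
  nra.
Qed.

Lemma exp_neg_2INR_le N : (1 <= N)%nat -> exp (- 2 * INR N) <= / 3.
Proof.
  intros HN. replace (- 2 * INR N) with (- (2 * INR N)) by ring. rewrite exp_Ropp.
  assert (1 <= INR N) by (replace 1 with (INR 1) by reflexivity; apply le_INR; lia).
  pose proof (exp_ineq1 (2 * INR N) ltac:(lra)).
  apply Rinv_le_contravar; lra.
Qed.

Section Potential.
Variables (a : R) (n N : nat) (p : R -> R) (M : R).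
Hypothesis a_pos : 0 < a.
Hypothesis n_pos : (0 < n)%nat.

Definition potential (y : R) : R := u_n a n y + v_n a n N p M y.

Let A := Rpower (INR n) (- a).

Lemma h_n_hpot : h_n a n N p M = hpot potential.
Proof.
  apply functional_extensionality; intro x; apply functional_extensionality; intro y.
  unfold h_n, hpot, potential. ring.
Qed.

Lemma amplitude_bounds : 0 < A <= 1.
Proof.
  assert (1 <= INR n) by (replace 1 with (INR 1) by reflexivity; apply le_INR; lia).
  unfold A. split; [apply exp_pos|].
  rewrite <- (Rpower_O (INR n)) by lra. apply Rle_Rpower; lra.
Qed.

Lemma u_n_eq y : u_n a n y = A * (1 - cos (2 * PI * y)).
Proof. reflexivity. Qed.

Lemma u_n_nonneg y : 0 <= u_n a n y.
Proof.
  rewrite u_n_eq. pose proof amplitude_bounds. pose proof (COS_bound (2 * PI * y)).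
  apply Rmult_le_pos; lra.
Qed.

Lemma v_n_nonneg y : 0 <= v_n a n N p M y.
Proof.
  unfold v_n. apply Rmult_le_pos; [apply u_n_nonneg|].
  apply Rmult_le_pos; [left; apply exp_pos | apply pow2_ge_0].
Qed.

Lemma potential_ge_u_n y : u_n a n y <= potential y.
Proof. unfold potential. pose proof (v_n_nonneg y). lra. Qed.

Lemma potential_0 : potential 0 = 0.
Proof. unfold potential, v_n, u_n. rewrite Rmult_0_r, cos_0. ring. Qed.

Lemma potential_ge_half_amplitude y : / 6 <= y <= / 2 -> A / 2 <= potential y.
Proof.
  intros Hy. pose proof (potential_ge_u_n y) as Hu. rewrite u_n_eq in Hu.
  assert (cos (2 * PI * y) <= cos (PI / 3)).
  { pose proof PI_gt_3. apply cos_decr_1; nra. }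
  rewrite cos_PI3 in *. pose proof amplitude_bounds. nra.
Qed.

Hypothesis p_derivable : forall y, ex_derive p y.

Lemma potential_derivable c : exists l, derivable_pt_lim potential c l.
Proof.
  assert (Hd : ex_derive potential c)
    by (unfold potential, v_n, u_n; auto_derive; repeat split; auto).
  destruct Hd as [l Hl]. exists l. apply is_derive_Reals, Hl.
Qed.

Hypothesis N_pos : (1 <= N)%nat.
Hypothesis M_ge_1 : 1 <= M.
Hypothesis p_small : forall y, 0 <= y <= / 6 -> Rabs (p y) <= / 2 * Rpower (INR n) (- a / 2).

Lemma v_n_small y : 0 <= y <= / 6 -> v_n a n N p M y <= A / 12 * u_n a n y.
Proof.
  intros Hy. unfold v_n. pose proof (u_n_nonneg y). pose proof (exp_neg_2INR_le N N_pos).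
  assert (0 < exp (- 2 * INR N)) by apply exp_pos.
  assert (Hsig : (/ 2 * Rpower (INR n) (- a / 2)) ^ 2 = A / 4).
  { assert (Rpower (INR n) (- a / 2) * Rpower (INR n) (- a / 2) = A)
      by (unfold A; rewrite <- Rpower_plus; f_equal; field).
    replace ((/ 2 * Rpower (INR n) (- a / 2)) ^ 2)
      with (/ 4 * (Rpower (INR n) (- a / 2) * Rpower (INR n) (- a / 2))) by field.
    lra. }
  assert (Hq : (p y / M) ^ 2 <= A / 4).
  { rewrite <- Hsig, <- (pow2_abs (p y / M)). apply pow_incr. split; [apply Rabs_pos|].
    unfold Rdiv. rewrite Rabs_mult, Rabs_inv, (Rabs_right M) by lra.
    assert (0 < / M <= 1)
      by (split; [apply Rinv_0_lt_compat | rewrite <- Rinv_1; apply Rinv_le_contravar]; lra).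
    pose proof (p_small y Hy). pose proof (Rabs_pos (p y)). nra. }
  assert (0 <= (p y / M) ^ 2) by apply pow2_ge_0.
  assert (exp (- 2 * INR N) * (p y / M) ^ 2 <= A / 12) by nra.
  nra.
Qed.

Lemma potential_drop c : 0 < c <= / 6 ->
  3 / 2 * A ^ 2 * c ^ 2 <= potential c - potential ((1 - A) * c).
Proof.
  intros Hc. pose proof amplitude_bounds. pose proof PI_gt_3. pose proof PI_4.
  set (c' := (1 - A) * c).
  assert (Hc' : 0 <= c' <= c) by (unfold c'; nra).
  assert (Hup : potential c' <= (1 + A / 12) * u_n a n c')
    by (unfold potential; pose proof (v_n_small c' ltac:(lra)); lra).
  assert (Hgap := cos_gap_lower A c ltac:(lra) ltac:(lra)). fold c' in Hgap.
  assert (Hsq : 1 - cos (2 * PI * c') <= 32 * c ^ 2).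
  { pose proof (one_minus_cos_le_sqr (2 * PI * c') ltac:(split; nra)).
    assert (PI * c' <= 4 * c) by nra. assert (0 <= PI * c') by nra. nra. }
  pose proof (potential_ge_u_n c). rewrite !u_n_eq in *.
  assert (0 <= A * A) by nra. nra.
Qed.

(* Moving x_j to (1 - A) x_j must not lower the action: the potential drop
   has to be paid by the kinetic part, which forces convexity. *)
Lemma pointwise_minimal_convex x j :
  pointwise_minimal potential x j -> 0 < x j <= / 6 ->
  (x (j + 1)%Z - x j) - (x j - x (j - 1)%Z) >= A / 2 * x j.
Proof.
  intros H Hc. pose proof amplitude_bounds.
  set (c := x j) in *. set (a0 := x (j - 1)%Z) in *. set (b := x (j + 1)%Z) in *.
  assert (Hmin := H ((1 - A) * c)). unfold hpot in Hmin. fold a0 b c in Hmin.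
  assert (Hdrop := potential_drop c Hc).
  assert (Hkin : A * c * ((b - c) - (c - a0)) >= A * c * (A / 2 * c)) by nra.
  apply Rle_ge. apply Rge_le, Rmult_le_reg_l in Hkin; [nra | nra].
Qed.

End Potential.

Lemma ex_derive_fsum (F : nat -> R -> R) m y :
  (forall j, ex_derive (F j) y) -> ex_derive (fun x => fsum (fun j => F j x) m) y.
Proof.
  intros H. induction m as [|m IH]; simpl; [apply ex_derive_const|].
  apply (ex_derive_plus (fun x => fsum (fun j => F j x) m) (F m)); auto.
Qed.

Lemma trig_poly_ex_derive p N : trig_poly_deg p N -> forall y, ex_derive p y.
Proof.
  intros [c0 [ac [bc [Hp _]]]] y.
  replace p with (fun x => c0 + fsum (fun j => ac (S j) * cos (2 * PI * INR (S j) * x)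
                                           + bc (S j) * sin (2 * PI * INR (S j) * x)) N)
    by (symmetry; apply functional_extensionality, Hp).
  apply (ex_derive_plus (fun _ => c0)); [apply ex_derive_const|].
  apply (ex_derive_fsum (fun j x => ac (S j) * cos (2 * PI * INR (S j) * x)
                                   + bc (S j) * sin (2 * PI * INR (S j) * x))).
  intros j. auto_derive. auto.
Qed.

(** * Counting Sigma_n *)

Definition zdiam_le (P : Z -> Prop) (L : nat) : Prop :=
  forall u v, P u -> P v -> (Z.abs (u - v) <= Z.of_nat L)%Z.

Definition zball (c : Z) (L : nat) : list Z :=
  map (fun t => (c - Z.of_nat L + Z.of_nat t)%Z) (seq 0 (2 * L + 1)).

Lemma in_zball c L s : (Z.abs (s - c) <= Z.of_nat L)%Z -> In s (zball c L).
Proof.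
  intros H. unfold zball. apply in_map_iff. exists (Z.to_nat (s - c + Z.of_nat L)).
  split; [lia | apply in_seq; lia].
Qed.

Lemma zdiam_le_in_zball (S : list Z) P L :
  zdiam_le P L -> exists c, forall s, In s S -> P s -> In s (zball c L).
Proof.
  intros H. destruct (classic (exists s, In s S /\ P s)) as [[s0 [_ H0]] | Hnone].
  - exists s0. intros s _ Hs. apply in_zball, H; assumption.
  - exists 0%Z. intros s Hs HP. exfalso. apply Hnone. exists s. split; assumption.
Qed.

Lemma NoDup_length_cover4 (S : list Z) (P1 P2 P3 P4 : Z -> Prop) L :
  NoDup S -> (forall s, In s S -> P1 s \/ P2 s \/ P3 s \/ P4 s) ->
  zdiam_le P1 L -> zdiam_le P2 L -> zdiam_le P3 L -> zdiam_le P4 L ->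
  (length S <= 4 * (2 * L + 1))%nat.
Proof.
  intros HN HS H1 H2 H3 H4.
  destruct (zdiam_le_in_zball S P1 L H1) as [c1 C1].
  destruct (zdiam_le_in_zball S P2 L H2) as [c2 C2].
  destruct (zdiam_le_in_zball S P3 L H3) as [c3 C3].
  destruct (zdiam_le_in_zball S P4 L H4) as [c4 C4].
  assert (Hincl : incl S (zball c1 L ++ zball c2 L ++ zball c3 L ++ zball c4 L)).
  { intros s Hs. rewrite !in_app_iff. destruct (HS s Hs) as [X|[X|[X|X]]]; auto. }
  pose proof (NoDup_incl_length HN Hincl) as Hlen.
  rewrite !length_app in Hlen. unfold zball in Hlen. rewrite !length_map, !length_seq in Hlen.
  lia.
Qed.

Lemma zdiam_le_of_gap (P : Z -> Prop) (D : R) :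
  0 <= D -> (forall u v, P u -> P v -> (u < v)%Z -> IZR (v - u) <= D) ->
  zdiam_le P (Z.to_nat (up D)).
Proof.
  intros HD H u v Hu Hv. destruct (archimed D) as [H1 _].
  assert (0 <= up D)%Z by (apply le_IZR; lra). rewrite Z2Nat.id by assumption.
  destruct (Z.lt_trichotomy u v) as [Hl|[->|Hl]].
  - pose proof (H u v Hu Hv Hl). assert (v - u < up D)%Z by (apply lt_IZR; lra). lia.
  - lia.
  - pose proof (H v u Hv Hu Hl). assert (u - v < up D)%Z by (apply lt_IZR; lra). lia.
Qed.

Lemma INR_Z_to_nat z : (0 <= z)%Z -> INR (Z.to_nat z) = IZR z.
Proof. intros H. rewrite INR_IZR_INZ, Z2Nat.id; auto. Qed.

Lemma Rpower_INR_ge_1 n b : (0 < n)%nat -> 0 <= b -> 1 <= Rpower (INR n) b.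
Proof.
  intros Hn Hb. assert (1 <= INR n) by (replace 1 with (INR 1) by reflexivity; apply le_INR; lia).
  rewrite <- (Rpower_O (INR n)) by lra. apply Rle_Rpower; lra.
Qed.

Section MainEstimate.
Variables (a delta : R) (n N : nat) (p : R -> R) (M : R) (x : Z -> R) (Sigma : list Z).
Hypothesis a_pos : 0 < a.
Hypothesis delta_pos : 0 < delta.
Hypothesis n_pos : (0 < n)%nat.
Hypothesis N_pos : (1 <= N)%nat.
Hypothesis M_ge_1 : 1 <= M.
Hypothesis p_derivable : forall y, ex_derive p y.
Hypothesis p_small : forall y, 0 <= y <= / 6 -> Rabs (p y) <= / 2 * Rpower (INR n) (- a / 2).
Hypothesis x_minimal : minimal_config (hpot (potential a n N p M)) x.
Hypothesis increases_eventually : forall k, exists j, (k < j)%Z /\ x j < x (j + 1)%Z.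
Hypothesis Sigma_in_J : forall i, In i Sigma -> in_J a delta n (x i).

Let W := potential a n N p M.
Let A := Rpower (INR n) (- a).
Let Q := Rpower (INR n) (a / 2).
Let P := Rpower (INR n) (a / 2 + delta / 2).
(* Chosen so that (A/2) m0 (m0 - 1) / 2 >= 2: then m0 steps of z'' >= (A/2) z
   multiply z by at least 3 > e. *)
Let m0 := Z.to_nat (up (3 * Q + 1)).
Let D := (P + 1) * INR m0 + 1 + Q * Q.

Let W_derivable := potential_derivable a n N p M p_derivable.

Lemma amplitude_mul_sqr : A * (Q * Q) = 1.
Proof.
  unfold A, Q. rewrite <- !Rpower_plus. replace (- a + (a / 2 + a / 2)) with 0 by field.
  apply Rpower_O, lt_0_INR. lia.
Qed.

Lemma P_Q_ge_1 : 1 <= P /\ 1 <= Q.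
Proof. split; apply Rpower_INR_ge_1; lra || lia. Qed.

Lemma m0_bounds : 3 * Q + 1 < INR m0 <= 3 * Q + 2.
Proof.
  pose proof P_Q_ge_1. destruct (archimed (3 * Q + 1)) as [H1 H2].
  unfold m0. rewrite INR_Z_to_nat by (apply le_IZR; lra). lra.
Qed.

Lemma m0_large : (1 <= m0)%nat /\ 2 <= A / 2 * INR m0 * (INR m0 - 1) / 2.
Proof.
  pose proof m0_bounds. pose proof P_Q_ge_1. pose proof amplitude_mul_sqr.
  pose proof (amplitude_bounds a n a_pos n_pos) as HA. fold A in HA. split.
  - apply INR_le. simpl. lra.
  - assert (INR m0 * (INR m0 - 1) >= 9 * (Q * Q)) by nra. nra.
Qed.

Lemma low_run_length j0 d K :
  (d = 1 \/ d = -1)%Z -> x j0 <= x (j0 + d)%Z ->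
  (forall t, (t <= K)%nat -> exp (- P) <= x (j0 + d * Z.of_nat t)%Z <= / 6) ->
  INR K < (P + 1) * INR m0.
Proof.
  intros Hd Hstart Hrange. destruct m0_large as [Hm1 Hm2].
  pose proof (amplitude_bounds a n a_pos n_pos) as HA. fold A in HA.
  set (z := fun t : nat => x (j0 + d * Z.of_nat t)%Z).
  apply (escape_time_bound z (A / 2) K ltac:(lra)); try assumption.
  - intros t Ht1 Ht2. unfold z.
    set (j := (j0 + d * Z.of_nat t)%Z).
    assert (Hc := Hrange t ltac:(lia)). fold j in Hc.
    pose proof (exp_pos (- P)).
    assert (Hconv := pointwise_minimal_convex a n N p M a_pos n_pos N_pos M_ge_1 p_small x j
                       (minimal_pointwise _ x x_minimal j) ltac:(lra)).
    fold A in Hconv.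
    destruct Hd as [-> | ->].
    + replace (j0 + 1 * Z.of_nat (S t))%Z with (j + 1)%Z by (unfold j; lia).
      replace (j0 + 1 * Z.of_nat (t - 1))%Z with (j - 1)%Z by (unfold j; lia). lra.
    + replace (j0 + -1 * Z.of_nat (S t))%Z with (j - 1)%Z by (unfold j; lia).
      replace (j0 + -1 * Z.of_nat (t - 1))%Z with (j + 1)%Z by (unfold j; lia). lra.
  - unfold z. assert (H0 := Hrange 0%nat ltac:(lia)). rewrite Z.mul_0_r, Z.add_0_r in *. lra.
  - unfold z. rewrite Z.mul_0_r, Z.add_0_r, Z.mul_1_r. exact Hstart.
  - intros t Ht. assert (Hc := Hrange t Ht). unfold z. lra.
Qed.

Lemma high_run_length u K :
  (forall k, (u <= k <= u + Z.of_nat K)%Z -> / 6 <= x k <= / 2) -> INR K <= 1 + / 2 * (Q * Q).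
Proof.
  intros Hrange. pose proof (amplitude_bounds a n a_pos n_pos) as HA. fold A in HA.
  assert (Hexc := excursion_length_bound W x (A / 2) (/ 6) u K x_minimal
                    (potential_0 a n N p M) ltac:(lra) ltac:(lra)
                    (potential_ge_half_amplitude a n N p M a_pos n_pos) Hrange).
  pose proof amplitude_mul_sqr. pose proof P_Q_ge_1.
  assert ((INR K - 1) * A * (Q * Q) <= / 2 * (Q * Q)) by nra.
  replace ((INR K - 1) * A * (Q * Q)) with (INR K - 1) in * by (rewrite Rmult_assoc; nra).
  lra.
Qed.

Lemma Sigma_range u : In u Sigma -> exp (- P) <= x u <= / 2.
Proof. intros Hu. exact (Sigma_in_J u Hu). Qed.

Let nondecreasing_after := nondecreasing_after W W_derivable x x_minimal increases_eventually.
Let nonincreasing_before := nonincreasing_before W W_derivable x x_minimal increases_eventually.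

Lemma gap_rising_low u v : In u Sigma -> In v Sigma ->
  x u <= x (u + 1)%Z -> x v <= / 6 -> (u < v)%Z -> IZR (v - u) <= D.
Proof.
  intros Hu Hv Hrise Hlow Huv. pose proof (Sigma_range u Hu).
  assert (Hmon := nondecreasing_on x u v (fun k Hk => nondecreasing_after u Hrise k ltac:(lia))).
  set (K := Z.to_nat (v - u)).
  assert (HK : INR K < (P + 1) * INR m0).
  { apply (low_run_length u 1 K ltac:(lia) Hrise). intros t Ht.
    pose proof (Hmon u (u + 1 * Z.of_nat t)%Z ltac:(lia) ltac:(unfold K in Ht; lia)).
    pose proof (Hmon (u + 1 * Z.of_nat t)%Z v ltac:(lia) ltac:(unfold K in Ht; lia)). lra. }
  unfold K in HK. rewrite INR_Z_to_nat in HK by lia. pose proof P_Q_ge_1. unfold D. nra.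
Qed.

Lemma gap_rising_high u v : In u Sigma -> In v Sigma ->
  x u <= x (u + 1)%Z -> / 6 <= x u -> (u < v)%Z -> IZR (v - u) <= D.
Proof.
  intros Hu Hv Hrise Hhigh Huv. pose proof (Sigma_range v Hv).
  assert (Hmon := nondecreasing_on x u v (fun k Hk => nondecreasing_after u Hrise k ltac:(lia))).
  set (K := Z.to_nat (v - u)).
  assert (HK := high_run_length u K).
  unfold K in HK. rewrite INR_Z_to_nat in HK by lia.
  pose proof m0_bounds. pose proof P_Q_ge_1. unfold D.
  enough (IZR (v - u) <= 1 + / 2 * (Q * Q)) by nra.
  apply HK. intros k Hk. unfold K in Hk.
  pose proof (Hmon u k ltac:(lia) ltac:(lia)). pose proof (Hmon k v ltac:(lia) ltac:(lia)). lra.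
Qed.

Lemma gap_falling_low u v : In u Sigma -> In v Sigma ->
  x (v + 1)%Z < x v -> x u <= / 6 -> (u < v)%Z -> IZR (v - u) <= D.
Proof.
  intros Hu Hv Hfall Hlow Huv. pose proof (Sigma_range v Hv).
  assert (Hmon := nonincreasing_on x u v (fun k Hk => nonincreasing_before v Hfall k ltac:(lia))).
  set (K := Z.to_nat (v - u)).
  assert (HK : INR K < (P + 1) * INR m0).
  { apply (low_run_length v (-1) K ltac:(lia)).
    - apply (Hmon (v + -1)%Z v); lia.
    - intros t Ht.
      pose proof (Hmon u (v + -1 * Z.of_nat t)%Z ltac:(lia) ltac:(unfold K in Ht; lia)).
      pose proof (Hmon (v + -1 * Z.of_nat t)%Z v ltac:(unfold K in Ht; lia) ltac:(lia)). lra. }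
  unfold K in HK. rewrite INR_Z_to_nat in HK by lia. pose proof P_Q_ge_1. unfold D. nra.
Qed.

Lemma gap_falling_high u v : In u Sigma -> In v Sigma ->
  x (v + 1)%Z < x v -> / 6 <= x v -> (u < v)%Z -> IZR (v - u) <= D.
Proof.
  intros Hu Hv Hfall Hhigh Huv. pose proof (Sigma_range u Hu).
  assert (Hmon := nonincreasing_on x u v (fun k Hk => nonincreasing_before v Hfall k ltac:(lia))).
  set (K := Z.to_nat (v - u)).
  assert (HK := high_run_length u K).
  unfold K in HK. rewrite INR_Z_to_nat in HK by lia.
  pose proof m0_bounds. pose proof P_Q_ge_1. unfold D.
  enough (IZR (v - u) <= 1 + / 2 * (Q * Q)) by nra.
  apply HK. intros k Hk. unfold K in Hk.
  pose proof (Hmon u k ltac:(lia) ltac:(lia)). pose proof (Hmon k v ltac:(lia) ltac:(lia)). lra.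
Qed.

Lemma gap_bound_le : D <= 12 * Rpower (INR n) (a + delta / 2).
Proof.
  pose proof m0_bounds. pose proof P_Q_ge_1.
  assert (HPQ : P * Q = Rpower (INR n) (a + delta / 2))
    by (unfold P, Q; rewrite <- Rpower_plus; f_equal; field).
  assert (HQQ : Q * Q <= Rpower (INR n) (a + delta / 2)).
  { unfold Q. rewrite <- Rpower_plus. apply Rle_Rpower; [|lra].
    replace 1 with (INR 1) by reflexivity. apply le_INR. lia. }
  assert ((P + 1) * INR m0 <= (P + 1) * (3 * Q + 2)) by (apply Rmult_le_compat_l; lra).
  unfold D. nra.
Qed.

Lemma count_in_J : NoDup Sigma -> INR (length Sigma) <= 110 * Rpower (INR n) (a + delta / 2).
Proof.
  intros HND.
  assert (HD : 0 <= D) by (pose proof m0_bounds; pose proof P_Q_ge_1; unfold D; nra).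
  assert (Hlen : (length Sigma <= 4 * (2 * Z.to_nat (up D) + 1))%nat).
  { apply (NoDup_length_cover4 Sigma
      (fun s => In s Sigma /\ x s <= x (s + 1)%Z /\ x s <= / 6)
      (fun s => In s Sigma /\ x s <= x (s + 1)%Z /\ / 6 <= x s)
      (fun s => In s Sigma /\ x (s + 1)%Z < x s /\ x s <= / 6)
      (fun s => In s Sigma /\ x (s + 1)%Z < x s /\ / 6 <= x s)); try assumption.
    - intros s Hs. destruct (Rle_or_lt (x s) (x (s + 1)%Z)), (Rle_or_lt (x s) (/ 6));
        intuition lra.
    - apply zdiam_le_of_gap; [exact HD|]. intros u v [Hu [Hu1 _]] [Hv [_ Hv2]].
      apply gap_rising_low; assumption.
    - apply zdiam_le_of_gap; [exact HD|]. intros u v [Hu [Hu1 Hu2]] [Hv _].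
      apply gap_rising_high; assumption.
    - apply zdiam_le_of_gap; [exact HD|]. intros u v [Hu [_ Hu2]] [Hv [Hv1 _]].
      apply gap_falling_low; assumption.
    - apply zdiam_le_of_gap; [exact HD|]. intros u v [Hu _] [Hv [Hv1 Hv2]].
      apply gap_falling_high; assumption. }
  apply le_INR in Hlen. rewrite mult_INR, plus_INR, mult_INR, INR_Z_to_nat in Hlen
    by (apply le_IZR; destruct (archimed D); lra).
  destruct (archimed D) as [_ Hup]. simpl in Hlen.
  pose proof gap_bound_le.
  assert (1 <= Rpower (INR n) (a + delta / 2)) by (apply Rpower_INR_ge_1; lra || lia).
  lra.
Qed.

End MainEstimate.

Lemma admissible_degree_pos a k C n l r N p M :
  0 < C -> admissible a k C n l r N p M -> (1 <= N)%nat.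
Proof.
  intros HC (_ & _ & _ & _ & _ & _ & HN & _).
  destruct N as [|N]; [|lia]. exfalso. simpl in HN.
  assert (0 < / C) by (apply Rinv_0_lt_compat, HC).
  assert (0 < Rpower (INR n) (a / 2 + a / (2 * INR k))) by apply exp_pos.
  nra.
Qed.

Lemma admissible_small_near_0 a k C n l r N p M :
  admissible a k C n l r N p M ->
  forall y, 0 <= y <= / 6 -> Rabs (p y) <= / 2 * Rpower (INR n) (- a / 2).
Proof.
  intros (Hl & _ & _ & _ & _ & _ & _ & _ & _ & _ & _ & Hsmall) y Hy.
  apply Hsmall; [lra | intros [Hly _]; lra].
Qed.

(* The bound holds for every delta > 0, so delta0 = 1. *)
Theorem lemmaB2 (a : R) (ha : 0 < a) :
  exists delta0 : R, 0 < delta0 /\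
  forall delta : R, 0 < delta < delta0 ->
  forall k : nat, a / delta < INR k ->
  forall C : R, 0 < C ->
  forall (l r : nat -> R) (N : nat -> nat) (p : nat -> R -> R) (M : nat -> R),
    (forall n : nat, (0 < n)%nat -> admissible a k C n (l n) (r n) (N n) (p n) (M n)) ->
  exists C' : R, 0 < C' /\
  forall n : nat, (0 < n)%nat ->
  forall (x : Z -> R) (omega : R),
    minimal_config (h_n a n (N n) (p n) (M n)) x ->
    has_frequency x omega -> 0 < omega ->
    forall S : list Z, NoDup S -> (forall i, In i S -> in_J a delta n (x i)) ->
    INR (length S) <= C' * Rpower (INR n) (a + delta / 2).
Proof.
  exists 1. split; [lra|].
  intros delta Hdelta k _ C HC l r N p M Hadm.
  exists 110. split; [lra|].
  intros n Hn x omega Hmin Hfreq Homega S HND HJ.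
  pose proof (Hadm n Hn) as Hadm_n.
  destruct Hadm_n as (_ & _ & _ & _ & _ & Htrig & _ & _ & _ & _ & HM & _).
  rewrite h_n_hpot in Hmin.
  apply (count_in_J a delta n (N n) (p n) (M n) x S); try assumption; try lra.
  - exact (admissible_degree_pos _ _ _ _ _ _ _ _ _ HC (Hadm n Hn)).
  - exact (trig_poly_ex_derive _ _ Htrig).
  - exact (admissible_small_near_0 _ _ _ _ _ _ _ _ _ (Hadm n Hn)).
  - exact (frequency_pos_increases x omega Hfreq Homega).
Qed.
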